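(* Let $N\xrightarrow{\tau}M$ be a transition of network states with $\mathrm{proc}(p,N)=\bigoplus_{i\in I}q_i!\lambda_i;P_i$ and $\mathrm{proc}(p,M)=\langle q_k!\lambda_k\rangle;P_k$ for some $k\in I$ (and $\mathrm{proc}(r,M)=\mathrm{proc}(r,N)$ for all other locations $r$). If $N\vdash_g G$, then $M\vdash_g G$.
   Context: Session calculus. Threads: $P ::= \mathbf{end} \mid \bigoplus_{i\in I} p_i!\lambda_i;P_i \mid \sum_{i\in I} p_i?\lambda_i;P_i \mid X \mid \mu X.P$; thread states additionally allow $\langle q!\lambda\rangle;P$ (output already selected). Network states $N ::= p[\![P]\!]\mid 0\mid N\parallel N$ (distinct locations, closed threads) modulo $\equiv$ (associativity, commutativity, unit $0$); $\mathrm{proc}(p,N)$ is the unique $P$ with $N\equiv p[\![P]\!]\parallel N'$. The choice transition is $p[\![\bigoplus_{i\in I}p_i!\lambda_i;P_i]\!]\parallel N \xrightarrow{\tau} p[\![\langle p_k!\lambda_k\rangle;P_k]\!]\parallel N$ for $k\in I$. Global types: $G ::= \mathbf{end} \mid \boxplus_{i\in I} p\to q_i{:}\lambda_i;G_i \mid X \mid \mu X.G$, $I$ finite nonempty, $p\neq q_i$, $\mu X.X$ and $\mu X.\mu Y.G$ excluded. Participants: $\mathrm{pt}(\mathbf{end})=\mathrm{pt}(X)=\emptyset$, $\mathrm{pt}(\mu X.G)=\mathrm{pt}(G)$, $\mathrm{pt}(\boxplus_{i\in I}p\to q_i{:}\lambda_i;G_i)=\bigcup_{i}(\{p,q_i\}\cup\mathrm{pt}(G_i))$.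 Projection types are like threads but with receives only of the unary form $p?\lambda;Q$, plus a merge $\sqcap_{i\in I}Q_i$. Projection $G\upharpoonright r$: $\mathbf{end}\upharpoonright r=\mathbf{end}$; $X\upharpoonright r=X$; $(\mu X.G)\upharpoonright r=\mathbf{end}$ if $r\notin\mathrm{pt}(G)$ and $\mu X.G$ is closed, else $\mu X.(G\upharpoonright r)$; $(\boxplus_{i\in I}p\to q_i{:}\lambda_i;G_i)\upharpoonright r$ equals $\bigoplus_{i\in I}q_i!\lambda_i;(G_i\upharpoonright r)$ if $r=p$, and otherwise $\sqcap_{i\in I}((p\to q_i{:}\lambda_i;G_i)\upharpoonright r)$, where $(p\to q{:}\lambda;G)\upharpoonright r$ is $p?\lambda;(G\upharpoonright r)$ if $r=q$ and $G\upharpoonright r$ if $r\notin\{p,q\}$. The judgement $P\vdash Q$ (thread state vs projection type) is the largest relation closed under: $P\{\mu X.P/X\}\vdash Q \Rightarrow \mu X.P\vdash Q$; $P\vdash Q\{\mu X.Q/X\}\Rightarrow P\vdash \mu X.Q$; $\mathbf{end}\vdash\mathbf{end}$; ($i\in I$, $P_i\vdash Q_i$) $\Rightarrow \sum_{i\in I}p_i?\lambda_i;P_i\vdash p_i?\lambda_i;Q_i$; ($I\subseteq J$, $P_i\vdash Q_i$ for all $i\in I$) $\Rightarrow \bigoplus_{i\in I}p_i!\lambda_i;P_i\vdash\bigoplus_{i\in J}p_i!\lambda_i;Q_i$; ($P\vdash Q_i$ for all $i\in I$) $\Rightarrow P\vdash\sqcap_{i\in I}Q_i$; ($k\in I$,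 $P_k\vdash Q_k$) $\Rightarrow \langle q_k!\lambda_k\rangle;P_k\vdash\bigoplus_{i\in I}q_i!\lambda_i;Q_i$. A projection type is guarded if every occurrence of a variable $X$ inside a subexpression $\mu X.Q$ lies within a subexpression $p!\lambda;Q'$ or $p?\lambda;Q'$. For a network state $N$ with locations $p_1,\dots,p_n$: $N\vdash G$ if $G$ is closed, $\mathrm{pt}(G)\subseteq\{p_1,\dots,p_n\}$ and $\mathrm{proc}(p_i,N)\vdash G\upharpoonright p_i$ for all $i$; $N\vdash_g G$ if moreover every $G\upharpoonright p_i$ is guarded. *)

From Stdlib Require Import List Arith PeanoNat Permutation Bool.
Import ListNotations.

Definition part := nat.   (* participants / locations *)
Definition label := nat.
Definition tvar := nat.

(** Threads and thread states.  TSel = internal choice (+)_i p_i!l_i;P_i,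
    TBra = external choice Sum_i p_i?l_i;P_i, TSent q l P = <q!l>;P. *)
Inductive thread : Type :=
| TEnd
| TSel (bs : list (part * label * thread))
| TBra (bs : list (part * label * thread))
| TVar (X : tvar)
| TRec (X : tvar) (P : thread)
| TSent (q : part) (l : label) (P : thread).

Fixpoint tsubst (P : thread) (X : tvar) (S : thread) : thread :=
  match P with
  | TEnd => TEnd
  | TSel bs => TSel (map (fun b => (fst b, tsubst (snd b) X S)) bs)
  | TBra bs => TBra (map (fun b => (fst b, tsubst (snd b) X S)) bs)
  | TVar Y => if Nat.eqb X Y then S else TVar Y
  | TRec Y P' => if Nat.eqb X Y then TRec Y P' else TRec Y (tsubst P' X S)
  | TSent q l P' => TSent q l (tsubst P' X S)
  end.

Fixpoint tfv (P : thread) : list tvar :=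
  match P with
  | TEnd => []
  | TSel bs => flat_map (fun b => tfv (snd b)) bs
  | TBra bs => flat_map (fun b => tfv (snd b)) bs
  | TVar Y => [Y]
  | TRec Y P' => remove Nat.eq_dec Y (tfv P')
  | TSent _ _ P' => tfv P'
  end.

(** Projection types. PRecv p l Q = p?l;Q, PMerge qs = merge of qs. *)
Inductive ptype : Type :=
| PEnd
| PSel (bs : list (part * label * ptype))
| PRecv (p : part) (l : label) (Q : ptype)
| PVar (X : tvar)
| PRec (X : tvar) (Q : ptype)
| PMerge (qs : list ptype).

Fixpoint psubst (Q : ptype) (X : tvar) (S : ptype) : ptype :=
  match Q with
  | PEnd => PEnd
  | PSel bs => PSel (map (fun b => (fst b, psubst (snd b) X S)) bs)
  | PRecv p l Q' => PRecv p l (psubst Q' X S)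
  | PVar Y => if Nat.eqb X Y then S else PVar Y
  | PRec Y Q' => if Nat.eqb X Y then PRec Y Q' else PRec Y (psubst Q' X S)
  | PMerge qs => PMerge (map (fun Q' => psubst Q' X S) qs)
  end.

(** Global types. GCom p bs = boxplus_i p -> q_i : l_i ; G_i. *)
Inductive gtype : Type :=
| GEnd
| GCom (p : part) (bs : list (part * label * gtype))
| GVar (X : tvar)
| GRec (X : tvar) (G : gtype).

Inductive wfG : gtype -> Prop :=
| wfG_end : wfG GEnd
| wfG_var X : wfG (GVar X)
| wfG_com p bs :
    bs <> [] ->
    (forall q l G, In (q, l, G) bs -> p <> q /\ wfG G) ->
    wfG (GCom p bs)
| wfG_rec X G :
    G <> GVar X ->
    (forall Y G', G <> GRec Y G') ->
    wfG G ->
    wfG (GRec X G).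

Fixpoint gpt (G : gtype) : list part :=
  match G with
  | GEnd => []
  | GVar _ => []
  | GRec _ G' => gpt G'
  | GCom p bs => flat_map (fun b => p :: fst (fst b) :: gpt (snd b)) bs
  end.

Fixpoint gfv (G : gtype) : list tvar :=
  match G with
  | GEnd => []
  | GVar X => [X]
  | GRec X G' => remove Nat.eq_dec X (gfv G')
  | GCom _ bs => flat_map (fun b => gfv (snd b)) bs
  end.

Definition closedG (G : gtype) : Prop := gfv G = [].

Definition closedb (G : gtype) : bool :=
  match gfv G with [] => true | _ => false end.

Fixpoint proj (G : gtype) (r : part) : ptype :=
  match G with
  | GEnd => PEnd
  | GVar X => PVar X
  | GRec X G' =>
      if andb (negb (existsb (Nat.eqb r) (gpt G'))) (closedb (GRec X G'))
      then PEnd else PRec X (proj G' r)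
  | GCom p bs =>
      if Nat.eqb r p then
        PSel (map (fun b => (fst (fst b), snd (fst b), proj (snd b) r)) bs)
      else
        PMerge (map (fun b =>
                       if Nat.eqb r (fst (fst b))
                       then PRecv p (snd (fst b)) (proj (snd b) r)
                       else proj (snd b) r) bs)
  end.

CoInductive types : thread -> ptype -> Prop :=
| ty_recL X P Q : types (tsubst P X (TRec X P)) Q -> types (TRec X P) Q
| ty_recR P X Q : types P (psubst Q X (PRec X Q)) -> types P (PRec X Q)
| ty_end : types TEnd PEnd
| ty_recv bs p l P Q :
    In (p, l, P) bs -> types P Q -> types (TBra bs) (PRecv p l Q)
| ty_sel bs cs :
    (forall p l P, In (p, l, P) bs -> exists Q, In (p, l, Q) cs /\ types P Q) ->
    types (TSel bs) (PSel cs)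
| ty_merge P qs : (forall Q, In Q qs -> types P Q) -> types P (PMerge qs)
| ty_sent cs q l P Q :
    In (q, l, Q) cs -> types P Q -> types (TSent q l P) (PSel cs).

Inductive guarded_in (X : tvar) : ptype -> Prop :=
| gi_end : guarded_in X PEnd
| gi_sel bs : guarded_in X (PSel bs)
| gi_recv p l Q : guarded_in X (PRecv p l Q)
| gi_var Y : Y <> X -> guarded_in X (PVar Y)
| gi_rec Y Q : guarded_in X Q -> guarded_in X (PRec Y Q)
| gi_merge qs : (forall Q, In Q qs -> guarded_in X Q) -> guarded_in X (PMerge qs).

Inductive guarded : ptype -> Prop :=
| g_end : guarded PEnd
| g_sel bs : (forall p l Q, In (p, l, Q) bs -> guarded Q) -> guarded (PSel bs)
| g_recv p l Q : guarded Q -> guarded (PRecv p l Q)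
| g_var X : guarded (PVar X)
| g_rec X Q : guarded_in X Q -> guarded Q -> guarded (PRec X Q)
| g_merge qs : (forall Q, In Q qs -> guarded Q) -> guarded (PMerge qs).

(** Network states: finite lists of located threads; structural congruence
    is handled via Permutation. *)
Definition network := list (part * thread).

Definition net_state (N : network) : Prop :=
  NoDup (map fst N) /\ (forall r P, In (r, P) N -> tfv P = []).

Definition proc (r : part) (N : network) : option thread :=
  match find (fun e => Nat.eqb (fst e) r) N with
  | Some e => Some (snd e)
  | None => None
  end.

Definition tau_step (N M : network) : Prop :=
  exists p bs q l P N',
    In (q, l, P) bs /\
    Permutation N ((p, TSel bs) :: N') /\
    Permutation M ((p, TSent q l P) :: N').

Definition net_typed (N : network) (G : gtype) : Prop :=
  closedG G /\
  (forall r, In r (gpt G) -> In r (map fst N)) /\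
  (forall r P, proc r N = Some P -> types P (proj G r)).

Definition net_typed_g (N : network) (G : gtype) : Prop :=
  net_typed N G /\ (forall r, In r (map fst N) -> guarded (proj G r)).

(** Idea: the choice step only changes the thread at location [p], from a
    selection (+)_i q_i!l_i;P_i to one committed branch <q_k!l_k>;P_k, and it
    leaves the set of locations unchanged.  Typing is therefore preserved as
    soon as we know:
    - [types_sel_committed]: every projection type that types the selection
      also types the committed branch (by coinduction on [types]: the rules
      applicable to a selection are unfolding on the right, merge, and the
      selection rule, whose chosen branch witnesses the [<q!l>] rule);
    - [tau_step_locations]: the locations of the network are preserved;
    - [net_typed_g_refine]: typing with guarded projections is preserved by
      any change of network that keeps the locations and replaces each
      thread by one typed by every projection type typing the old one. *)

From Stdlib Require Import List Permutation PeanoNat.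

Lemma types_sel_committed (bs : list (part * label * thread))
    (q : part) (l : label) (P : thread) :
  In (q, l, P) bs ->
  forall Q, types (TSel bs) Q -> types (TSent q l P) Q.
Proof.
  intros Hin. cofix CH. intros Q Hty.
  inversion Hty; subst.
  - apply ty_recR. apply CH. assumption.
  - match goal with
    | Hbr : forall p l P, In (p, l, P) bs -> _ |- _ =>
        destruct (Hbr _ _ _ Hin) as (Q' & HinQ' & HtyQ')
    end.
    eapply ty_sent; eassumption.
  - apply ty_merge. intros Q' HQ'. apply CH. auto.
Qed.

Lemma tau_step_locations (N M : network) :
  tau_step N M -> forall r, In r (map fst N) <-> In r (map fst M).
Proof.
  intros (p & bs & q & l & P & N' & _ & HN & HM) r.
  apply (Permutation_map fst) in HN. apply (Permutation_map fst) in HM.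
  simpl in HN, HM.
  split; intro Hr.
  - apply (Permutation_in _ (Permutation_sym HM)), (Permutation_in _ HN), Hr.
  - apply (Permutation_in _ (Permutation_sym HN)), (Permutation_in _ HM), Hr.
Qed.

Lemma net_typed_g_refine (N M : network) (G : gtype) :
  (forall r, In r (map fst N) <-> In r (map fst M)) ->
  (forall r P', proc r M = Some P' ->
     exists P, proc r N = Some P /\ (forall Q, types P Q -> types P' Q)) ->
  net_typed_g N G -> net_typed_g M G.
Proof.
  intros Hloc Hrefine [[Hclosed [Hpt Hty]] Hguard].
  split; [split; [exact Hclosed | split] |].
  - intros r Hr. apply Hloc, Hpt, Hr.
  - intros r P' HP'.
    destruct (Hrefine r P' HP') as (P & HP & Himp).
    apply Himp, Hty, HP.
  - intros r Hr. apply Hguard, Hloc, Hr.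
Qed.

Theorem mainTheorem11 (N M : network) (p : part)
    (bs : list (part * label * thread)) (q : part) (l : label) (P : thread)
    (G : gtype) :
  net_state N ->
  wfG G ->
  tau_step N M ->
  proc p N = Some (TSel bs) ->
  proc p M = Some (TSent q l P) ->
  In (q, l, P) bs ->
  (forall r, r <> p -> proc r M = proc r N) ->
  net_typed_g N G ->
  net_typed_g M G.
Proof.
  intros _ _ Hstep HpN HpM Hin Hother.
  apply net_typed_g_refine; [exact (tau_step_locations N M Hstep) |].
  intros r P' HP'.
  destruct (Nat.eq_dec r p) as [-> | Hne].
  -
    rewrite HpM in HP'. injection HP' as <-.
    exists (TSel bs). split; [exact HpN |].
    exact (types_sel_committed bs q l P Hin).
  -
    rewrite Hother in HP' by exact Hne.
    exists P'. split; [exact HP' | auto].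
Qed.
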